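(* Let $L>1$ and let $\mathcal{T}$ be an $L$-increasing tree of any depth $D$, i.e. $c(v)\ge L\,c(u)$ whenever $u$ is an ancestor of $v$. Then the online algorithm \textsc{Noadd} is $\frac{L}{L-1}$-competitive for MLAPD on $\mathcal{T}$.
   Context: Multi-level aggregation problem with deadlines (MLAPD): an instance is a rooted tree $\mathcal{T}$ with root $r$ and positive node costs $c(v)>0$, together with a set $\mathcal{R}$ of requests $\rho=(v,a,d)$, each issued at a node $v$, with arrival time $a$ and deadline $d\ge a$ (deadlines are assumed distinct). A service is a pair $(S,t)$ where $S$ is a subtree of $\mathcal{T}$ containing $r$ and $t$ is the transmission time; it costs $c(S)=\sum_{u\in S}c(u)$. A request $(v,a,d)$ is satisfied by $(S,t)$ if $v\in S$ and $a\le t\le d$. A schedule is a set of services; it is feasible if every request is satisfied; its cost is the sum of its services' costs. Online: requests are revealed at their arrival times. For a request $\rho$ issued at $v$, $P_\rho$ denotes the set of nodes on the path from $r$ to $v$. An algorithm is $c$-competitive if its cost is at most $c$ times the optimal cost on every instance. \textsc{Noadd}: whenever a request $\rho$ that has not yet been satisfied by a previous transmission reaches its deadline $d_\rho$, it transmits $(P_\rho,d_\rho)$ and nothing else. *)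

From mathcomp Require Import all_boot all_order all_algebra.
Set Implicit Arguments. Unset Strict Implicit. Unset Printing Implicit Defensive.
Import Order.TTheory GRing.Theory Num.Theory.
Local Open Scope ring_scope.

Section MLAPD.
Variables (R : realFieldType) (T : finType).

Definition is_rooted_tree (parent : T -> T) (r : T) : Prop :=
  parent r = r /\ forall v : T, exists k : nat, iter k parent v = r.

Definition is_ancestor (parent : T -> T) (u v : T) : Prop :=
  u <> v /\ exists k : nat, (0 < k)%N /\ iter k parent v = u.

Definition L_increasing (parent : T -> T) (c : T -> R) (L : R) : Prop :=
  forall u v : T, is_ancestor parent u v -> L * c u <= c v.

Definition is_rooted_subtree (parent : T -> T) (r : T) (S : {set T}) : Prop :=
  r \in S /\ forall u : T, u \in S -> parent u \in S.

Definition path_set (parent : T -> T) (v : T) : {set T} :=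
  [set u | [exists k : 'I_#|T|.+1, iter k parent v == u]].

Definition request := (T * R * R)%type.
Definition req_node (q : request) : T := q.1.1.
Definition req_arr (q : request) : R := q.1.2.
Definition req_dl (q : request) : R := q.2.

(* a service (S, t) : transmitted subtree and transmission time *)
Definition service := ({set T} * R)%type.

Definition satisfies (s : service) (q : request) : bool :=
  (req_node q \in s.1) && (req_arr q <= s.2 <= req_dl q).

Definition service_cost (c : T -> R) (s : service) : R := \sum_(u in s.1) c u.

Definition sched_cost (c : T -> R) (sch : seq service) : R :=
  \sum_(s <- sch) service_cost c s.

Definition feasible (parent : T -> T) (r : T) (reqs : seq request)
    (sch : seq service) : Prop :=
  (forall s, s \in sch -> is_rooted_subtree parent r s.1) /\
  (forall q, q \in reqs -> has (fun s => satisfies s q) sch).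

Definition noadd_step (parent : T -> T) (sch : seq service) (q : request)
  : seq service :=
  if has (fun s => satisfies s q) sch then sch
  else rcons sch (path_set parent (req_node q), req_dl q).

Definition noadd (parent : T -> T) (reqs : seq request) : seq service :=
  foldl (noadd_step parent) [::]
        (sort (fun x y : request => req_dl x <= req_dl y) reqs).

Definition valid_requests (reqs : seq request) : Prop :=
  (forall q, q \in reqs -> req_arr q <= req_dl q) /\ uniq (map req_dl reqs).

End MLAPD.

From mathcomp Require Import all_boot all_order all_algebra.
From mathcomp Require Import ring.
Import Order.TTheory GRing.Theory Num.Theory.
Set Implicit Arguments. Unset Strict Implicit.
Local Open Scope ring_scope.

(* Write K = L/(L-1).  The proof is a charging argument in three parts.
   1. Path cost.  On an L-increasing tree the costs along the path from the
      root to v grow geometrically, so c(P_v) <= K c(v).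
   2. Triggers.  Noadd transmits exactly one service (P_q, d_q) per
      "triggering" request q (one not satisfied when its deadline is
      reached).  Since requests are processed by increasing deadline, a
      trigger y issued on the path P_x of an earlier trigger x must arrive
      after d_x -- otherwise (P_x, d_x) would have satisfied it.
   3. Charging.  Any feasible schedule contains a service satisfying each
      trigger; two triggers at the same node have disjoint time windows, so
      they are satisfied by distinct services, each containing that node.
   Counting per node, cost(Noadd) <= K * sum_q c(v_q) <= K * cost(sch). *)

Section CostCounting.
Variables (R : realFieldType) (T : finType).

Lemma sum_subset_le (c : T -> R) (A B : {set T}) :
  (forall v, 0 <= c v) -> A \subset B ->
  \sum_(u in A) c u <= \sum_(u in B) c u.
Proof.
move=> c0 AB; rewrite [X in _ <= X](big_setID A) /= (setIidPr AB) lerDl.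
exact: sumr_ge0.
Qed.

Lemma sum_setU1_le (c : T -> R) (v : T) (B : {set T}) :
  (forall v, 0 <= c v) -> \sum_(u in v |: B) c u <= c v + \sum_(u in B) c u.
Proof.
move=> c0; have [vB|vB] := boolP (v \in B); last by rewrite big_setU1.
by rewrite (setUidPr _) ?sub1set // lerDr.
Qed.

Lemma sum_count (I : Type) (X : seq I) (A : I -> {set T}) (F : T -> R) :
  \sum_(x <- X) \sum_(u in A x) F u = \sum_u F u *+ count (fun x => u \in A x) X.
Proof.
under eq_bigr do rewrite big_mkcond /=.
rewrite exchange_big /=; apply: eq_bigr => u _.
by rewrite -sum1_count -sumrMnr -big_mkcond.
Qed.

Lemma sum_by_node (I : Type) (X : seq I) (g : I -> T) (F : T -> R) :
  \sum_(x <- X) F (g x) = \sum_u F u *+ count (fun x => u == g x) X.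
Proof.
transitivity (\sum_(x <- X) \sum_(u in [set g x]) F u).
  by apply: eq_bigr => x _; rewrite big_set1.
rewrite sum_count; apply: eq_bigr => u _.
by congr (_ *+ _); apply: eq_count => x; rewrite in_set1.
Qed.

End CostCounting.

Section PathCost.
Variables (R : realFieldType) (T : finType) (parent : T -> T).

Lemma path_set_self (v : T) : v \in path_set parent v.
Proof. by rewrite inE; apply/existsP; exists ord0. Qed.

Lemma path_set_parent (v : T) :
  path_set parent v \subset v |: path_set parent (parent v).
Proof.
apply/subsetP => u; rewrite inE => /existsP [[[|k] hk]] /eqP <-.
  exact: setU11.
rewrite [iter _ _ _]iterSr; apply/setU1P; right; rewrite inE; apply/existsP.
by exists (Ordinal (ltnW hk)).
Qed.

Lemma iter_fixpoint (r : T) (k : nat) : parent r = r -> iter k parent r = r.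
Proof. by move=> pr; elim: k => //= k ->. Qed.

Lemma path_set_root (r : T) : parent r = r -> path_set parent r = [set r].
Proof.
move=> pr; apply/setP => u; rewrite !inE; apply/existsP/eqP.
  by case=> k /eqP <-; rewrite iter_fixpoint.
by move=> ->; exists ord0.
Qed.

Lemma path_cost_geometric (r : T) (c : T -> R) (L : R) :
  parent r = r -> (forall v, exists k, iter k parent v = r) ->
  (forall v, 0 <= c v) -> 1 < L ->
  (forall v, v != r -> L * c (parent v) <= c v) ->
  forall v, \sum_(u in path_set parent v) c u <= L / (L - 1) * c v.
Proof.
move=> pr reach c0 L1 step v.
have L0 : 0 < L by apply: lt_trans L1.
have K1 : 1 <= L / (L - 1) by rewrite ler_pdivlMr ?subr_gt0 // mul1r gerBl.
have [k] := reach v; elim: k v => [|k IH] v hk.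
  by move: hk => /= ->; rewrite path_set_root // big_set1 ler_peMl.
have [->|vr] := eqVneq v r; first by rewrite path_set_root // big_set1 ler_peMl.
have cpar : c (parent v) <= c v / L by rewrite ler_pdivlMr // mulrC step.
rewrite iterSr in hk.
apply: le_trans (sum_subset_le c0 (path_set_parent v)) _.
apply: le_trans (sum_setU1_le _ _ c0) _.
apply: le_trans (lerD (lexx _) (IH _ hk)) _.
apply: le_trans (lerD (lexx _) (ler_wpM2l _ cpar)) _.
  by apply: ltW; rewrite divr_gt0 ?subr_gt0.
suff -> : c v + L / (L - 1) * (c v / L) = L / (L - 1) * c v by [].
by field; rewrite !gt_eqF ?subr_gt0.
Qed.

Lemma path_cost (r : T) (c : T -> R) (L : R) :
  is_rooted_tree parent r -> (forall v, 0 < c v) -> 1 < L ->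
  L_increasing parent c L ->
  forall v, \sum_(u in path_set parent v) c u <= L / (L - 1) * c v.
Proof.
move=> [pr reach] cpos L1 Linc; apply: (path_cost_geometric (r := r)) => //.
  by move=> v; apply: ltW.
move=> v vr; apply: Linc; split; last by exists 1%N.
move=> pv; have [k] := reach v.
by rewrite iter_fixpoint // => /eqP; rewrite (negbTE vr).
Qed.

End PathCost.

Section Triggers.
Variables (R : realFieldType) (T : finType) (parent : T -> T).
Local Notation request := (request R T).
Local Notation service := (service R T).

Definition noadd_service (q : request) : service :=
  (path_set parent (req_node q), req_dl q).

(* One step of Noadd, tracked through the list X of requests that have
   triggered a transmission so far: q triggers iff none of their services
   satisfies it. *)
Definition trigger_step (X : seq request) (q : request) : seq request :=
  if has (fun s => satisfies s q) (map noadd_service X) then X else rcons X q.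

Lemma noadd_step_triggers (X Y : seq request) :
  foldl (noadd_step parent) (map noadd_service X) Y =
  map noadd_service (foldl trigger_step X Y).
Proof.
elim: Y X => //= y Y IH X; rewrite -IH /noadd_step /trigger_step.
by case: ifP => // _; rewrite map_rcons.
Qed.

Lemma noadd_triggers (reqs : seq request) :
  noadd parent reqs = map noadd_service
    (foldl trigger_step [::] (sort (fun x y : request => req_dl x <= req_dl y) reqs)).
Proof. exact: (noadd_step_triggers [::]). Qed.

Lemma mem_triggers (X Y : seq request) :
  {subset foldl trigger_step X Y <= X ++ Y}.
Proof.
elim: Y X => [|y Y IH] X q /=; first by rewrite cats0.
move/IH; rewrite /trigger_step; case: ifP => _;
  by rewrite !mem_cat ?mem_rcons !inE; case: (q \in X); case: (q == y); case: (q \in Y).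
Qed.

Definition separated (x y : request) : bool :=
  (req_node y \in path_set parent (req_node x)) ==> (req_dl x < req_arr y).

(* Adding a request with the latest deadline seen so far keeps the triggers
   pairwise separated: if y is appended, (P_x, d_x) did not satisfy y, and
   d_x <= d_y leaves only the possibility d_x < a_y. *)
Lemma trigger_step_separated (X : seq request) (y : request) :
  pairwise separated X -> all (fun x => req_dl x <= req_dl y) X ->
  pairwise separated (trigger_step X y).
Proof.
rewrite /trigger_step => sepX dX; case: ifP => // /negbT /hasPn unsat.
rewrite pairwise_rcons sepX andbT; apply/allP => x xX.
have := unsat _ (map_f noadd_service xX); rewrite /satisfies /=.
rewrite (allP dX x xX) andbT => unsat_x; apply/implyP => yPx.
by rewrite ltNge; apply: contra unsat_x => ->; rewrite yPx.
Qed.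

Lemma triggers_separated (X Y : seq request) :
  pairwise separated X ->
  all (fun x => all (fun y => req_dl x <= req_dl y) Y) X ->
  sorted (fun x y : request => req_dl x <= req_dl y) Y ->
  pairwise separated (foldl trigger_step X Y).
Proof.
elim: Y X => //= y Y IH X sepX dX sY.
have yY : all (fun z => req_dl y <= req_dl z) Y.
  by apply: order_path_min sY => a b d; apply: le_trans.
apply: IH; [| |exact: path_sorted sY].
  by apply: trigger_step_separated => //; apply/allP => x /(allP dX) /andP [].
rewrite /trigger_step; case: ifP => _; first by apply/allP => x /(allP dX) /andP [].
by rewrite all_rcons yY; apply/allP => x /(allP dX) /andP [].
Qed.

End Triggers.

Section Charging.
Variables (R : realFieldType) (T : finType) (parent : T -> T).
Variable sch : seq (service R T).
Local Notation request := (request R T).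
Local Notation service := (service R T).

Definition served (q : request) : bool := has (fun s => satisfies s q) sch.

(* The first service of sch satisfying q: the one q is charged to. *)
Definition witness (q : request) : service :=
  nth (set0, 0) sch (find (fun s => satisfies s q) sch).

Lemma witnessP (q : request) :
  served q -> witness q \in sch /\ satisfies (witness q) q.
Proof.
move=> sq; split; first by apply: mem_nth; rewrite -has_find.
exact: (nth_find (set0, 0) sq).
Qed.

Lemma disjoint_windows (s : service) (x y : request) :
  req_dl x < req_arr y -> satisfies s x -> satisfies s y -> False.
Proof.
move=> xy /andP [_ /andP [_ tx]] /andP [_ /andP [ty _]].
by have := lt_le_trans (le_lt_trans tx xy) ty; rewrite ltxx.
Qed.

Lemma witnesses_uniq (u : T) (X : seq request) :
  pairwise (separated parent) X -> all served X ->
  uniq (map witness [seq q <- X | u == req_node q]).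
Proof.
elim: X => //= x X IH /andP [sepx sepX] /andP [sx sX].
case: eqP => [ux|_]; last exact: IH.
rewrite map_cons /= IH // andbT; apply/mapP => -[y].
rewrite mem_filter => /andP [/eqP uy yX] wxy.
have := allP sepx y yX; rewrite /separated -uy ux path_set_self /= => xy.
have [_ wx] := witnessP sx; have [_ wy] := witnessP (allP sX y yX).
by apply: (disjoint_windows xy wx); rewrite wxy.
Qed.

Lemma count_node_le (u : T) (X : seq request) :
  pairwise (separated parent) X -> all served X ->
  (count (fun q => u == req_node q) X <= count (fun s : service => u \in s.1) sch)%N.
Proof.
move=> sepX sX; rewrite -size_filter -(size_map witness) -size_filter.
apply: uniq_leq_size; first exact: witnesses_uniq.
move=> s /mapP [q]; rewrite mem_filter => /andP [/eqP uq qX] ->.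
have [wsch /andP [wq _]] := witnessP (allP sX q qX).
by rewrite mem_filter wsch andbT uq.
Qed.

End Charging.

Theorem mainTheorem2 (R : realFieldType) (T : finType) (parent : T -> T) (r : T)
    (c : T -> R) (L : R) :
  is_rooted_tree parent r ->
  (forall v, 0 < c v) ->
  1 < L ->
  L_increasing parent c L ->
  forall reqs : seq (request R T), valid_requests reqs ->
  forall sch : seq (service R T), feasible parent r reqs sch ->
  sched_cost c (noadd parent reqs) <= L / (L - 1) * sched_cost c sch.
Proof.
move=> tree cpos L1 Linc reqs _ sch [_ feas].
rewrite noadd_triggers; set Y := sort _ reqs; set X := foldl (trigger_step parent) [::] Y.
have sepX : pairwise (separated parent) X.
  by apply: triggers_separated => //; apply: sort_sorted => a b; apply: le_total.
have servedX : all (served sch) X.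
  by apply/allP => q /mem_triggers; rewrite mem_sort; apply: feas.
(* Path cost: cost(Noadd) <= K * sum over triggers q of c(v_q). *)
rewrite /sched_cost big_map.
apply: le_trans (ler_sum _ (fun q _ => path_cost tree cpos L1 Linc (req_node q))) _.
have K0 : 0 < L / (L - 1) by rewrite divr_gt0 ?subr_gt0 // (lt_trans ltr01 L1).
rewrite -mulr_sumr ler_pM2l //.
(* Charging: per node, triggers there are at most sch's services there. *)
rewrite sum_by_node /service_cost sum_count.
apply: ler_sum => u _; apply: ler_wpMn2l; first exact: ltW.
exact: (count_node_le u sepX servedX).
Qed.
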